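(* Let $\sigma$ be the $8$-uniform morphism on $\{0,1,2\}$ given by $\sigma(0)=00000122$, $\sigma(1)=10120011$, $\sigma(2)=12120021$, and $\varphi:\{0,1,2\}\to\mathbb{F}_2$ the coding $\varphi(0)=1$, $\varphi(1)=0$, $\varphi(2)=1$. Let $\mathbf a=(a_i)_{i\ge0}=\varphi(\sigma^\infty(0))$ and $f_{\mathbf a}(T)=\sum_{i\ge0}a_iT^{-i}\in\mathbb{F}_2[[T^{-1}]]$. Then $\mu(f_{\mathbf a})=5$.
   Context: $\sigma^\infty(0)=\lim_n\sigma^n(0)$ is the fixed point of $\sigma$ beginning with $0$; the coding is applied letterwise. Fix a real $|T|>1$; $|g|=|T|^{-i_0}$ for $g\in\mathbb{F}_2((T^{-1}))$ with leading term $T^{-i_0}$. The irrationality exponent $\mu(f)$ is the supremum of real $\tau$ such that $|f-P/Q|<|Q|^{-\tau}$ has infinitely many solutions $(P,Q)\in\mathbb{F}_2[T]^2$, $Q\ne0$. *)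

From HB Require Import structures.
From mathcomp Require Import all_boot all_order all_algebra.
From mathcomp Require Import boolp classical_sets cardinality reals ereal exp.
Set Implicit Arguments. Unset Strict Implicit. Unset Printing Implicit Defensive.
Import Order.TTheory GRing.Theory Num.Theory.
Local Open Scope ring_scope.

Definition sigma (x : nat) : seq nat :=
  match x with
  | 0 => [:: 0; 0; 0; 0; 0; 1; 2; 2]%N
  | 1 => [:: 1; 0; 1; 2; 0; 0; 1; 1]%N
  | 2 => [:: 1; 2; 1; 2; 0; 0; 2; 1]%N
  | _ => [::]
  end.

Definition sigma_word (w : seq nat) : seq nat := flatten (map sigma w).

Definition sigma_iter (n : nat) : seq nat := iter n sigma_word [:: 0%N].

(* sigma^oo(0) = lim_n sigma^n(0).  Since sigma(0) begins with 0, sigma^n(0)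
   is a prefix of sigma^(n+1)(0); sigma^(i+1)(0) has length 8^(i+1) > i, so
   its i-th letter is the i-th letter of the limit. *)
Definition sigma_fix (i : nat) : nat := nth 0%N (sigma_iter i.+1) i.

Definition phi (x : nat) : 'F_2 :=
  match x with
  | 0 => 1
  | 1 => 0
  | _ => 1
  end.

Definition a_seq (i : nat) : 'F_2 := phi (sigma_fix i).

(* A Laurent series g = sum_i g_i T^{-i} is represented by its coefficient
   function  g : int -> 'F_2  (g i = coefficient of T^{-i}), subject to
   only finitely many positive powers of T, i.e. g i = 0 for i small. *)
Definition laurent (g : int -> 'F_2) : Prop :=
  exists N : int, forall i : int, i < N -> g i = 0.

Definition poly_laurent (P : {poly 'F_2}) (i : int) : 'F_2 :=
  if i <= 0 then P`_(`|i|%N) else 0.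

Definition f_a (i : int) : 'F_2 :=
  if 0 <= i then a_seq `|i|%N else 0.

Definition poly_mul_laurent (Q : {poly 'F_2}) (g : int -> 'F_2) (i : int)
  : 'F_2 := \sum_(k < size Q) Q`_k * g (i + k%:Z).

Definition lead_index (g : int -> 'F_2) : int :=
  xget 0 [set i : int | g i != 0 /\ forall j : int, j < i -> g j = 0].

(* |g| = b^{-i0} (b = |T| > 1), and |0| = 0 *)
Definition labs {R : realType} (b : R) (g : int -> 'F_2) : R :=
  if `[< exists i : int, g i != 0 >] then b ^ (- lead_index g) else 0.

(* (P,Q) is a solution of |f - P/Q| < |Q|^{-tau}, Q <> 0.  P/Q is the
   (unique) Laurent series g with Q g = P. *)
Definition approx_sol {R : realType} (b : R) (f : int -> 'F_2) (tau : R)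
  (PQ : {poly 'F_2} * {poly 'F_2}) : Prop :=
  PQ.2 != 0 /\
  exists g : int -> 'F_2,
    [/\ laurent g,
        poly_mul_laurent PQ.2 g = poly_laurent PQ.1 &
        labs b (fun i => f i - g i) < powR (labs b (poly_laurent PQ.2)) (- tau)].

Definition irr_exponent {R : realType} (b : R) (f : int -> 'F_2) : \bar R :=
  ereal_sup [set (tau%:E)%E | tau in
             [set tau : R | ~ finite_set (approx_sol b f tau)]].

(* Write u = sigma^oo(0) and N = 8^k.  Because sigma(0) = 00000122 and sigma(0),
   sigma(1) begin with 0, 1, one has u_N = 0, u_(5N) = 1 and u_(m+N) = u_m for
   0 < m < 4N.  So the series g_k = p_k / (T^N + 1) repeating
   a_1 ... a_N satisfies |f_a - g_k| = |T|^(-5N) = |T^N + 1|^(-5): mu(f_a) >= 5.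
   Conversely, let |f_a - P/Q| < |Q|^(-tau) with tau > 5 and d = deg Q >= 1, and pick
   k with N <= 2d and d < 4N.  Then P/Q and g_k both agree with f_a beyond T^-(N+d),
   while (T^N + 1) P - Q p_k is a polynomial, so P/Q = g_k.  As T^N + 1 = (T + 1)^N
   and p_k(1) = a_0 + ... + a_(N-1) = 1, this forces N <= d, and then g_k agrees with
   f_a only up to 5N <= 5d: a contradiction.  Hence d = 0 and P/Q = 1. *)

From mathcomp Require Import all_boot all_order all_algebra.
From mathcomp Require Import boolp classical_sets cardinality reals ereal exp.
From mathcomp Require Import zify.
Import Order.TTheory GRing.Theory Num.Theory.

Set Implicit Arguments.
Unset Strict Implicit.
Unset Printing Implicit Defensive.

(** * The fixed point of sigma *)

Local Notation letter := (fun y : nat => y < 3).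

Lemma size_sigma x : x < 3 -> size (sigma x) = 8.
Proof. by case: x => [|[|[|]]]. Qed.

Lemma sigma_letter x : all letter (sigma x).
Proof. by case: x => [|[|[|]]]. Qed.

Lemma sigma_word_letter w : all letter (sigma_word w).
Proof. by elim: w => //= x w IH; rewrite /sigma_word /= all_cat sigma_letter. Qed.

Lemma size_sigma_word w : all letter w -> size (sigma_word w) = 8 * size w.
Proof.
elim: w => //= x w IH /andP[hx hw].
by rewrite /sigma_word /= size_cat size_sigma // -/(sigma_word w) IH // mulnS.
Qed.

Lemma nth_sigma_word w i j : all letter w -> i < size w -> j < 8 ->
  nth 0 (sigma_word w) (8 * i + j) = nth 0 (sigma (nth 0 w i)) j.
Proof.
elim: w i => [|x w IH] [|i] //= /andP[hx hw] hi hj.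
  by rewrite /sigma_word /= nth_cat size_sigma // hj.
rewrite /sigma_word /= -/(sigma_word w) nth_cat size_sigma // ifN; last lia.
by rewrite -IH //; congr nth; lia.
Qed.

Lemma sigma_iterS n : sigma_iter n.+1 = sigma_word (sigma_iter n).
Proof. by []. Qed.

Lemma sigma_iter_letter n : all letter (sigma_iter n).
Proof. by case: n => //= n; apply: sigma_word_letter. Qed.

Lemma size_sigma_iter n : size (sigma_iter n) = 8 ^ n.
Proof.
by elim: n => // n IH; rewrite sigma_iterS size_sigma_word ?sigma_iter_letter // IH expnS.
Qed.

Lemma nth_sigma_iterS n i : i < 8 ^ n ->
  nth 0 (sigma_iter n.+1) i = nth 0 (sigma_iter n) i.
Proof.
elim: n i => [|n IH] i hi; first by case: i hi.
have hq : i %/ 8 < 8 ^ n by rewrite ltn_divLR // -expnSr.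
rewrite (divn_eq i 8) mulnC [sigma_iter n.+2]sigma_iterS [sigma_iter n.+1]sigma_iterS.
rewrite !nth_sigma_word -?sigma_iterS ?sigma_iter_letter ?size_sigma_iter ?ltn_mod ?IH //.
by rewrite (leq_trans hq) // leq_exp2l.
Qed.

Lemma nth_sigma_iter_leq n m i : n <= m -> i < 8 ^ n ->
  nth 0 (sigma_iter m) i = nth 0 (sigma_iter n) i.
Proof.
move=> + hi; elim: m => [|m IH]; first by rewrite leqn0 => /eqP->.
rewrite leq_eqVlt ltnS => /predU1P[-> //|hnm].
by rewrite nth_sigma_iterS ?IH // (leq_trans hi) // leq_exp2l.
Qed.

Lemma ltn_exp8S i : i < 8 ^ i.+1.
Proof. by rewrite (ltn_trans (ltn_expl i (isT : 1 < 8))) // ltn_exp2l. Qed.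

Lemma sigma_fixE n i : i < 8 ^ n -> sigma_fix i = nth 0 (sigma_iter n) i.
Proof.
move=> hi; rewrite /sigma_fix -(@nth_sigma_iter_leq _ (maxn n i.+1)) ?leq_maxr ?ltn_exp8S //.
exact: nth_sigma_iter_leq (leq_maxl _ _) hi.
Qed.

Lemma sigma_fix_letter i : sigma_fix i < 3.
Proof.
by apply: (allP (sigma_iter_letter i.+1)); rewrite mem_nth // size_sigma_iter ltn_exp8S.
Qed.

Lemma sigma_fix_rec q r : r < 8 ->
  sigma_fix (8 * q + r) = nth 0 (sigma (sigma_fix q)) r.
Proof.
move=> hr; have hq := ltn_exp8S q.
rewrite (@sigma_fixE q.+2) ?(sigma_fixE hq); last by rewrite expnS; lia.
by rewrite sigma_iterS nth_sigma_word ?sigma_iter_letter ?size_sigma_iter.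
Qed.

(* [sigma 0] begins with 0 and [sigma 1] with 1. *)
Lemma sigma_fix_mulX k c : sigma_fix c <= 1 -> sigma_fix (8 ^ k * c) = sigma_fix c.
Proof.
move=> hc; elim: k => [|k IH]; first by rewrite mul1n.
rewrite expnS -mulnA -[8 * _]addn0 sigma_fix_rec // IH.
by case: (sigma_fix c) hc => [|[|]].
Qed.

Lemma sigma_fix_exp8 k : sigma_fix (8 ^ k) = 0.
Proof. by rewrite -[8 ^ k]muln1 sigma_fix_mulX (@sigma_fixE 1). Qed.

Lemma sigma_fix_5exp8 k : sigma_fix (5 * 8 ^ k) = 1.
Proof. by rewrite mulnC sigma_fix_mulX (@sigma_fixE 1). Qed.

Lemma sigma_fix_addX k m : 0 < m < 4 * 8 ^ k -> sigma_fix (m + 8 ^ k) = sigma_fix m.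
Proof.
elim: k m => [|k IH] m /andP[m_gt0 hm].
  by case: m m_gt0 hm => [|[|[|[|]]]] //= _ _; rewrite !(@sigma_fixE 1).
rewrite (divn_eq m 8) mulnC.
have -> : 8 * (m %/ 8) + m %% 8 + 8 ^ k.+1 = 8 * (m %/ 8 + 8 ^ k) + m %% 8.
  by rewrite expnS; lia.
rewrite !sigma_fix_rec ?ltn_mod //.
case hq : (m %/ 8) => [|q]; first by rewrite sigma_fix_exp8.
rewrite IH // -hq ltn_divLR //; move: hm; rewrite expnS; lia.
Qed.

Lemma sigma_fix_addMX k j m : 0 < m -> m + j * 8 ^ k < 5 * 8 ^ k ->
  sigma_fix (m + j * 8 ^ k) = sigma_fix m.
Proof.
move=> m_gt0; elim: j => [|j IH] hm; first by rewrite addn0.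
by rewrite mulSn addnCA addnC sigma_fix_addX ?IH; lia.
Qed.

Lemma sigma_fix_modX k m : m.+1 < 5 * 8 ^ k ->
  sigma_fix (m %% 8 ^ k).+1 = sigma_fix m.+1.
Proof.
move=> hm; have N_gt0 : 0 < 8 ^ k by rewrite expn_gt0.
have dec : m.+1 = (m %% 8 ^ k).+1 + m %/ 8 ^ k * 8 ^ k by rewrite addSn addnC -divn_eq.
by rewrite dec sigma_fix_addMX // -dec.
Qed.

Lemma sum_phi_sigma c : c < 3 -> (\sum_(j < 8) phi (nth 0 (sigma c) j))%R = phi c.
Proof.
by case: c => [|[|[|]]] // _; rewrite !big_ord_recr big_ord0 /=; apply/eqP; vm_compute.
Qed.

Lemma sum_a_seq_mul8 n : (\sum_(i < 8 * n) a_seq i = \sum_(i < n) a_seq i)%R.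
Proof.
elim: n => [|n IH]; first by rewrite !big_ord0.
rewrite -!(big_mkord xpredT) in IH *.
rewrite [in RHS]big_nat_recr // -IH mulnS addnC (big_cat_nat _ (leq_addr 8 _)) //=.
congr (_ + _)%R; rewrite -{1}[8 * n]add0n big_addn addKn big_mkord.
rewrite /a_seq -(sum_phi_sigma (sigma_fix_letter n)).
by apply: eq_bigr => j _; rewrite addnC sigma_fix_rec.
Qed.

Lemma sum_a_seq_exp8 k : (\sum_(i < 8 ^ k) a_seq i)%R = 1%R.
Proof. by elim: k => [|k IH]; rewrite ?big_ord1 // expnS sum_a_seq_mul8. Qed.

Local Open Scope ring_scope.

(** * Polynomials acting on Laurent series *)

Lemma pchar_F2 : (2 \in [pchar 'F_2])%N.
Proof. exact: pchar_Fp. Qed.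

Lemma pchar_polyF2 : (2 \in [pchar {poly 'F_2}])%N.
Proof. by rewrite pchar_poly pchar_F2. Qed.

Lemma F2_neq0 (x : 'F_2) : x != 0 -> x = 1.
Proof. by case: x => -[|[|]] //= i _; apply/val_inj. Qed.

Lemma poly_mul_laurent_widen n (Q : {poly 'F_2}) g i : (size Q <= n)%N ->
  poly_mul_laurent Q g i = \sum_(k < n) Q`_k * g (i + k%:Z).
Proof.
move=> hn; rewrite /poly_mul_laurent -!(big_mkord xpredT (fun k => Q`_k * g (i + k%:Z))).
rewrite (@big_cat_nat _ _ _ (size Q) 0 n) //= [X in _ + X]big1_seq ?addr0 // => k.
by rewrite /= mem_index_iota => /andP[hk _]; rewrite nth_default ?mul0r.
Qed.

Lemma poly_mul_laurent0 g i : poly_mul_laurent 0 g i = 0.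
Proof. by rewrite /poly_mul_laurent size_poly0 big_ord0. Qed.

Lemma poly_mul_laurentDl p q g i :
  poly_mul_laurent (p + q) g i = poly_mul_laurent p g i + poly_mul_laurent q g i.
Proof.
pose n := maxn (size p) (size q).
rewrite !(@poly_mul_laurent_widen n) ?leq_maxl ?leq_maxr ?size_polyD // -big_split.
by apply: eq_bigr => k _; rewrite coefD mulrDl.
Qed.

Lemma poly_mul_laurentC c g i : poly_mul_laurent c%:P g i = c * g i.
Proof. by rewrite (@poly_mul_laurent_widen 1) ?size_polyC ?leq_b1 // big_ord1 coefC addr0. Qed.

Lemma poly_mul_laurentMX p g i :
  poly_mul_laurent (p * 'X) g i = poly_mul_laurent p g (i + 1).
Proof.
have hs : (size (p * 'X)%R <= (size p).+1)%N.
  by rewrite (leq_trans (size_polyMleq _ _)) // size_polyX addn2.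
rewrite (poly_mul_laurent_widen _ _ hs) (@poly_mul_laurent_widen (size p) p) //.
rewrite big_ord_recl coefMX eqxx mul0r add0r.
by apply: eq_bigr => k _; rewrite coefMX /= -addrA.
Qed.

Lemma poly_mul_laurentXn n g i : poly_mul_laurent 'X^n g i = g (i + n%:Z).
Proof.
elim: n i => [|n IH] i; first by rewrite expr0 -polyC1 poly_mul_laurentC mul1r addr0.
by rewrite exprSr poly_mul_laurentMX IH -addrA -intS.
Qed.

Lemma poly_mul_laurentBr p g1 g2 i :
  poly_mul_laurent p (fun j => g1 j - g2 j) i =
  poly_mul_laurent p g1 i - poly_mul_laurent p g2 i.
Proof. by rewrite /poly_mul_laurent -sumrB; apply: eq_bigr => k _; rewrite mulrBr. Qed.

Lemma poly_mul_laurentZl c p g i :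
  poly_mul_laurent (c *: p) g i = c * poly_mul_laurent p g i.
Proof.
rewrite !(@poly_mul_laurent_widen (size p)) ?size_scale_leq // mulr_sumr.
by apply: eq_bigr => k _; rewrite coefZ mulrA.
Qed.

Lemma poly_mul_laurent_shift p g i :
  poly_mul_laurent p (fun j => g (j + 1)) i = poly_mul_laurent p g (i + 1).
Proof. by apply: eq_bigr => k _; rewrite addrAC. Qed.

Lemma poly_mul_laurentM p q g :
  poly_mul_laurent (p * q) g = poly_mul_laurent p (poly_mul_laurent q g).
Proof.
elim/poly_ind: p q g => [|p c IH] q g; apply/funext => i.
  by rewrite mul0r !poly_mul_laurent0.
rewrite mulrDl -mulrA -commr_polyX mul_polyC !poly_mul_laurentDl IH poly_mul_laurentZl.
rewrite poly_mul_laurentC poly_mul_laurentMX -poly_mul_laurent_shift.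
by congr (poly_mul_laurent p _ i + _); apply/funext => j; rewrite poly_mul_laurentMX.
Qed.

Lemma poly_mul_laurentAC p q g :
  poly_mul_laurent p (poly_mul_laurent q g) = poly_mul_laurent q (poly_mul_laurent p g).
Proof. by rewrite -!poly_mul_laurentM mulrC. Qed.

Definition laurent1 (i : int) : 'F_2 := (i == 0)%:R.

Lemma poly_mul_laurent1 P : poly_mul_laurent P laurent1 = poly_laurent P.
Proof.
apply/funext => i; rewrite /poly_laurent; case: ifPn => [i_le0|]; last first.
  rewrite -ltNge => i_gt0; apply: big1 => k _.
  by rewrite /laurent1 gt_eqF ?mulr0 // ltr_wpDr.
have -> : i = - `|i|%N%:Z by rewrite lez0_abs // opprK.
rewrite abszN absz_nat (@poly_mul_laurent_widen (maxn (size P) `|i|.+1)) ?leq_maxl //.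
rewrite (bigD1 (Ordinal (leq_trans (ltnSn `|i|) (leq_maxr _ _)))) //= big1 ?addr0.
  by rewrite /laurent1 addNr eqxx mulr1.
move=> k /eqP hk; rewrite /laurent1 addrC subr_eq0 eqz_nat.
by case: eqP => [hki|_]; [case: hk; apply: val_inj | rewrite mulr0].
Qed.

Lemma poly_mul_laurent_poly Q P :
  poly_mul_laurent Q (poly_laurent P) = poly_laurent (Q * P).
Proof. by rewrite -!poly_mul_laurent1 poly_mul_laurentM. Qed.

Lemma poly_laurent_gt0 P i : 0 < i -> poly_laurent P i = 0.
Proof. by move=> i_gt0; rewrite /poly_laurent leNgt i_gt0. Qed.

Lemma poly_laurent_inj : injective poly_laurent.
Proof.
move=> P P' E; apply/polyP => n; have := congr1 (fun h => h (- n%:Z)) E.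
by rewrite /poly_laurent oppr_le0 abszN absz_nat.
Qed.

Definition is_lead_index (g : int -> 'F_2) (v : int) : Prop :=
  g v != 0 /\ forall j, j < v -> g j = 0.

Lemma lead_index_exists g : laurent g -> (exists i, g i != 0) ->
  exists v, is_lead_index g v.
Proof.
move=> [N gN] [i gi].
have [|m gm m_min] := ex_minnP (P := fun n : nat => g (N + n%:Z) != 0).
  exists `|i - N|%N; rewrite gez0_abs ?subrKC // subr_ge0 leNgt.
  by apply: contra gi => /gN ->.
exists (N + m%:Z); split => // j hj; have [/gN //|jN] := ltP j N.
apply/eqP; apply: contraTT hj => gj; rewrite -leNgt -(subrKC N j) lerD2l.
by rewrite -[j - N]gez0_abs ?subr_ge0 // lez_nat m_min // gez0_abs ?subrKC ?subr_ge0.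
Qed.

Lemma is_lead_index_uniq g v w : is_lead_index g v -> is_lead_index g w -> v = w.
Proof.
move=> [gv vmin] [gw wmin]; case: (ltgtP v w) => // [/wmin|/vmin] g0.
  by rewrite g0 eqxx in gv.
by rewrite g0 eqxx in gw.
Qed.

Lemma labs_lead {R : realType} (b : R) g v :
  is_lead_index g v -> labs b g = b ^ (- v).
Proof.
move=> gv; have gnz : exists i, g i != 0 by exists v; case: gv.
rewrite /labs asboolT // /lead_index; congr (_ ^ - _).
by apply: (xget_unique _ gv) => w gw; apply: is_lead_index_uniq gw gv.
Qed.

Lemma is_lead_index_mul Q g v : Q != 0 -> is_lead_index g v ->
  is_lead_index (poly_mul_laurent Q g) (v - (size Q).-1%:Z).
Proof.
move=> Q0 [gv vmin]; have sQ : size Q = (size Q).-1.+1 by rewrite prednK ?size_poly_gt0.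
rewrite /poly_mul_laurent sQ; set d := (size Q).-1; split => [|j hj].
  rewrite big_ord_recr /= big1 => [|k _]; last first.
    by rewrite vmin ?mulr0 //; have := ltn_ord k; lia.
  by rewrite add0r subrK mulf_neq0 // -lead_coefE lead_coef_eq0.
by apply: big1 => k _; rewrite vmin ?mulr0 //; have := ltn_ord k; lia.
Qed.

Lemma is_lead_index_poly Q : Q != 0 ->
  is_lead_index (poly_laurent Q) (- (size Q).-1%:Z).
Proof.
move=> Q0; rewrite -poly_mul_laurent1 -[X in is_lead_index _ X]add0r.
apply: is_lead_index_mul Q0 _; split => [|j j_lt0]; first by rewrite /laurent1 oner_eq0.
by rewrite /laurent1 lt_eqF.
Qed.

Lemma laurentB f g : laurent f -> laurent g -> laurent (fun i => f i - g i).
Proof.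
move=> [M fM] [N gN]; exists (Num.min M N) => i; rewrite lt_min => /andP[iM iN].
by rewrite fM ?gN ?subr0.
Qed.

Lemma laurent_f_a : laurent f_a.
Proof. by exists 0 => i i_lt0; rewrite /f_a leNgt i_lt0. Qed.

(** * The rational approximations *)

(* [q_k := approx_den k], [p_k := approx_num k] and [g_k := approx_series k = p_k / q_k],
   which is [f_a] with its block [a_1 ... a_(8^k)] repeated periodically. *)
Definition approx_den k : {poly 'F_2} := 'X^(8 ^ k) + 1.

Definition approx_series k (i : int) : 'F_2 :=
  match i with
  | Posz 0 => 1
  | Posz n.+1 => a_seq (n %% 8 ^ k).+1
  | Negz _ => 0
  end.

Definition approx_num k : {poly 'F_2} :=
  \poly_(j < (8 ^ k).+1) (if j == 0%N then 0 else a_seq (8 ^ k - j)).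

Lemma laurent_approx_series k : laurent (approx_series k).
Proof. by exists 0 => -[]. Qed.

Lemma size_approx_den k : size (approx_den k) = (8 ^ k).+1.
Proof. by rewrite size_XnaddC // expn_gt0. Qed.

Lemma approx_den_neq0 k : approx_den k != 0.
Proof. by rewrite -size_poly_eq0 size_approx_den. Qed.

Lemma poly_mul_approx_den k g i :
  poly_mul_laurent (approx_den k) g i = g i + g (i + (8 ^ k)%N).
Proof.
by rewrite poly_mul_laurentDl poly_mul_laurentXn -polyC1 poly_mul_laurentC mul1r addrC.
Qed.

Lemma approx_seriesDX k n : (0 < n)%N ->
  approx_series k (n + 8 ^ k)%N = approx_series k n.
Proof. by case: n => // n _; rewrite addSn /= modnDr. Qed.

Lemma approx_series_small k n : (n <= 8 ^ k)%N -> approx_series k n = a_seq n.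
Proof. by case: n => // n hn; rewrite /= modn_small. Qed.

Lemma a_seq_exp8 k : a_seq (8 ^ k) = 1.
Proof. by rewrite /a_seq sigma_fix_exp8. Qed.

Lemma poly_mul_approx_series k :
  poly_mul_laurent (approx_den k) (approx_series k) = poly_laurent (approx_num k).
Proof.
apply/funext => -[[|n]|n]; rewrite poly_mul_approx_den.
- rewrite add0r !approx_series_small // a_seq_exp8 /poly_laurent coef_poly /=.
  by rewrite addrr_pchar2 // pchar_F2.
- by rewrite poly_laurent_gt0 // -PoszD approx_seriesDX // addrr_pchar2 // pchar_F2.
rewrite add0r /poly_laurent /= coef_poly ltnS; have [hn|hn] := ltnP n (8 ^ k).
  have -> : Negz n + (8 ^ k)%N = (8 ^ k - n.+1)%N by rewrite NegzE; lia.
  by rewrite approx_series_small ?leq_subr.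
by have -> : Negz n + (8 ^ k)%N = Negz (n - 8 ^ k) by rewrite !NegzE; lia.
Qed.

Lemma f_a_nat (n : nat) : f_a n = a_seq n.
Proof. by []. Qed.

Lemma is_lead_index_f_a_sub_approx k :
  is_lead_index (fun i => f_a i - approx_series k i) (5 * 8 ^ k)%N.
Proof.
have N_gt0 : (0 < 8 ^ k)%N by rewrite expn_gt0.
have -> : (5 * 8 ^ k)%N = (4 * 8 ^ k + (8 ^ k).-1).+1 by lia.
split.
  rewrite f_a_nat /= modnMDl modn_small ?prednK ?ltn_pred // a_seq_exp8.
  by rewrite -addnS prednK // -mulSnr /a_seq sigma_fix_5exp8 sub0r oppr_eq0 oner_eq0.
move=> [[|m]|m] hm; rewrite ?f_a_nat /= ?subrr //.
by rewrite /a_seq sigma_fix_modX ?subrr //; rewrite ltz_nat in hm; lia.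
Qed.

Lemma approx_denE k : approx_den k = ('X - 1) ^+ (8 ^ k)%N.
Proof.
rewrite (oppr_pchar2 pchar_polyF2) exprDn_pchar ?expr1n //.
by rewrite (eq_pnat _ (pcharf_eq pchar_polyF2)) pnatX.
Qed.

Lemma approx_num_root1 k : ~~ root (approx_num k) 1.
Proof.
rewrite /root horner_poly big_ord_recl /= mul0r add0r.
rewrite (eq_bigr (fun i : 'I_(8 ^ k) => a_seq (8 ^ k - i.+1))) => [|i _]; last first.
  by rewrite expr1n mulr1.
suff -> : \sum_(i < 8 ^ k) a_seq (8 ^ k - i.+1) = 1 by rewrite oner_eq0.
by rewrite -(sum_a_seq_exp8 k) -(big_mkord xpredT a_seq) big_rev_mkord subn0.
Qed.

Lemma approx_den_dvd k Q P : Q * approx_num k = approx_den k * P -> approx_den k %| Q.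
Proof.
move=> E; have cop : coprimep (approx_den k) (approx_num k).
  by rewrite coprimep_sym approx_denE coprimep_expr // coprimep_XsubC approx_num_root1.
by rewrite -(Gauss_dvdpl _ cop) E dvdp_mulIl.
Qed.

Lemma exists_scale d : (0 < d)%N -> exists k, (d < 4 * 8 ^ k)%N /\ (8 ^ k <= 2 * d)%N.
Proof.
move=> d_gt0; have := trunc_log_ltn d (isT : (1 < 8)%N).
have := trunc_logP (isT : (1 < 8)%N) d_gt0; set t := trunc_log 8 d => lo hi.
have [dt|dt] := ltnP d (4 * 8 ^ t); first by exists t; split => //; lia.
by exists t.+1; move: hi; rewrite !expnS; split; lia.
Qed.

Section Agreement.
Variables (Q P : {poly 'F_2}) (g : int -> 'F_2).
Hypotheses (Q0 : Q != 0) (QgP : poly_mul_laurent Q g = poly_laurent P).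
Let d := (size Q).-1.
(* What [|f_a - P/Q| < |Q|^-tau] yields for [tau > 5]. *)
Hypothesis f_a_g : forall i : int, i <= (5 * d)%N -> f_a i = g i.

(* [Q p_k = q_k P] with [q_k, p_k] coprime forces [8^k <= d], but [f_a] and [g_k]
   differ at [5 * 8^k <= 5 d]. *)
Lemma approx_series_not_agree k : g <> approx_series k.
Proof.
move=> gE; have : approx_den k %| Q.
  apply: (approx_den_dvd (P := P)); apply: poly_laurent_inj.
  by rewrite -!poly_mul_laurent_poly -poly_mul_approx_series -gE -QgP poly_mul_laurentAC.
move=> /(dvdp_leq Q0); rewrite size_approx_den -/d => N_le_d.
have [+ _] := is_lead_index_f_a_sub_approx k; rewrite -gE f_a_g ?subrr ?eqxx //.
by rewrite lez_nat leq_pmul2l // -ltnS prednK ?size_poly_gt0.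
Qed.

(* Otherwise [q_k Q (g - g_k) = q_k P - Q p_k] would be a polynomial whose leading
   term, of index [v - 8^k - d] for the leading index [v > 8^k + d] of [g - g_k],
   is a negative power of [T]. *)
Lemma agree_approx_series k : (d < 4 * 8 ^ k)%N -> (8 ^ k <= 2 * d)%N ->
  laurent g -> g = approx_series k.
Proof.
move=> d_lt N_le gl; apply/funext => i; apply/eqP; rewrite -subr_eq0; apply: contraT => hi.
have gkl := laurent_approx_series k.
have [v [hv vmin]] := lead_index_exists (laurentB gl gkl) (ex_intro _ i hi).
have v_gt : Posz (8 ^ k + d) < v.
  rewrite ltNge; apply: contraNN hv => v_le.
  have [_ fa_gk] := is_lead_index_f_a_sub_approx k.
  rewrite -f_a_g ?fa_gk //; move: v_le; rewrite /d; lia.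
have idx_gt0 : 0 < v - d%:Z - (8 ^ k)%N%:Z by rewrite -addrA -opprD subr_gt0 -PoszD addnC.
have := is_lead_index_mul (approx_den_neq0 k) (is_lead_index_mul Q0 (conj hv vmin)).
rewrite size_approx_den /= => -[+ _].
have -> : poly_mul_laurent Q (fun j => g j - approx_series k j) =
          fun j => poly_laurent P j - poly_mul_laurent Q (approx_series k) j.
  by apply/funext => j; rewrite poly_mul_laurentBr QgP.
rewrite poly_mul_laurentBr poly_mul_laurent_poly poly_mul_laurentAC poly_mul_approx_series.
by rewrite poly_mul_laurent_poly !poly_laurent_gt0 ?subrr ?eqxx.
Qed.

Lemma agree_eq1 : laurent g -> (P, Q) = (1, 1).
Proof.
move=> gl; have d0 : d = 0%N.
  have [//|d_gt0] := posnP d; have [k [d_lt N_le]] := exists_scale d_gt0.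
  by have := approx_series_not_agree (agree_approx_series d_lt N_le gl).
have Q1 : Q = 1.
  have : (size Q <= 1)%N by move: d0; rewrite /d; lia.
  by move=> /size1_polyC QE; move: Q0; rewrite QE polyC_eq0 => /F2_neq0 ->.
have gP : g = poly_laurent P.
  by rewrite -QgP Q1 -polyC1; apply/funext => i; rewrite poly_mul_laurentC mul1r.
congr pair => //; apply/polyP => j; have := f_a_g (i := - j%:Z).
rewrite d0 gP /poly_laurent oppr_le0 abszN absz_nat coefC le0z_nat => <- //.
by case: j.
Qed.

End Agreement.

(** * The irrationality exponent *)

Lemma ereal_sup_squeeze (R : realType) (A : set R) (x : R) :
  (forall t, A t -> t <= x) -> (forall t, t < x -> A t) ->
  ereal_sup [set t%:E | t in A] = x%:E.
Proof.
move=> A_le_x A_lt_x; apply/eqP; rewrite eq_le; apply/andP; split.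
  by apply: ge_ereal_sup => _ [t At <-]; rewrite lee_fin A_le_x.
apply/lee_subgt0Pr => e e_gt0; apply: ereal_sup_ubound; exists (x - e) => //.
by apply: A_lt_x; rewrite ltrBlDr ltrDl.
Qed.

Section Irrationality_exponent.
Variables (R : realType) (b : R).
Hypothesis b_gt1 : 1 < b.

Let b_ge0 : 0 <= b. Proof. exact: le_trans ler01 (ltW b_gt1). Qed.

Lemma gt1_ltr_powR : {mono powR b : x y / x < y}.
Proof.
move=> x y; rewrite /powR gt_eqF ?(lt_trans ltr01 b_gt1) // ltr_expR.
by rewrite ltr_pM2r // ln_gt0.
Qed.

Lemma labs_poly_laurent Q : Q != 0 ->
  labs b (poly_laurent Q) = b `^ (size Q).-1%:R.
Proof. by move=> Q0; rewrite (labs_lead _ (is_lead_index_poly Q0)) opprK powR_mulrn. Qed.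

Lemma labs_lt_coef_eq0 h y : laurent h -> labs b h < b `^ (- y) ->
  forall i : int, i%:~R <= y -> h i = 0.
Proof.
move=> hl hlt i iy; apply/eqP/negPn/negP => hi.
have [v [hv vmin]] := lead_index_exists hl (ex_intro _ i hi).
move: hlt; rewrite (labs_lead _ (conj hv vmin)) -powR_intmul // gt1_ltr_powR.
rewrite intrN ltrN2 => yv.
by move: hi; rewrite vmin ?eqxx // -(ltr_int R) (le_lt_trans iy).
Qed.

Lemma approx_sol_gt5 tau : 5 < tau -> (approx_sol b f_a tau `<=` [set (1, 1)])%classic.
Proof.
move=> tau_gt5 [P Q] [/= Q0 [g [gl QgP lt]]].
rewrite labs_poly_laurent // -powRrM mulrN in lt.
apply: (agree_eq1 Q0 QgP _ gl) => i hi; apply/subr0_eq.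
apply: (labs_lt_coef_eq0 (laurentB laurent_f_a gl) lt).
apply: (@le_trans _ _ (5 * (size Q).-1)%N%:R); first by move: hi; rewrite -(ler_int R).
by rewrite natrM mulrC ler_wpM2l // ltW.
Qed.

Lemma approx_sol_lt5 tau k : tau < 5 ->
  approx_sol b f_a tau (approx_num k, approx_den k).
Proof.
move=> tau_lt5; split => /=; first exact: approx_den_neq0.
exists (approx_series k); split; [exact: laurent_approx_series|exact: poly_mul_approx_series|].
rewrite (labs_lead _ (is_lead_index_f_a_sub_approx k)) labs_poly_laurent ?approx_den_neq0 //.
rewrite size_approx_den -powRrM -powR_intmul // gt1_ltr_powR // mulrN intrN ltrN2 /=.
by rewrite -!pmulrn natrM [X in X < _]mulrC ltr_pM2r // ltr0n expn_gt0.
Qed.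

Lemma approx_sol_infinite tau : tau < 5 -> ~ finite_set (approx_sol b f_a tau).
Proof.
move=> tau_lt5 fin; apply: infinite_nat.
pose approx k := (approx_num k, approx_den k).
have approx_inj : injective approx.
  move=> k1 k2 [_ /(congr1 (fun p : {poly 'F_2} => size p))].
  by rewrite /= !size_approx_den => -[] /expnI; apply.
apply: sub_finite_set (finite_preimage (in2W approx_inj) fin) => k _.
exact: approx_sol_lt5.
Qed.

End Irrationality_exponent.


Theorem proposition5p5 (R : realType) (b : R) (hb : 1 < b) :
  irr_exponent b f_a = (5%:R)%:E.
Proof.
apply: ereal_sup_squeeze => tau; last exact: approx_sol_infinite.
move=> infinite; rewrite leNgt; apply/negP => tau_gt5; apply: infinite.
exact: sub_finite_set (approx_sol_gt5 hb tau_gt5) (finite_set1 _).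
Qed.
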